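(* Let $E\to M$ be a holomorphic Lie algebroid of rank $m$ over a complex $n$-manifold with $\operatorname{rank}\rho=m<n$, let $(T'M,L)$ be a complex Lagrange space with Chern–Lagrange nonlinear connection $N^i_k=g^{\bar j i}\frac{\partial^2L}{\partial z^k\partial\bar\eta^j}$, and let $N^\alpha_k(z,u)=\rho^\alpha_i\big(N^i_k(z,\eta)+u^\gamma\frac{\partial\rho^i_\gamma}{\partial z^k}\big)$, $\eta^i=\rho^i_\gamma u^\gamma$, be the nonlinear connection induced on $E$ by it. Let $L^*(z,u)=L(z,\rho(z)u)$ and $g_{\alpha\bar\beta}=\frac{\partial^2L^*}{\partial u^\alpha\partial\bar u^\beta}=\rho^i_\alpha\overline{\rho^j_\beta}g_{i\bar j}$, with inverse $g^{\bar\beta\alpha}$. Then \[ N^\alpha_k=g^{\bar\beta\alpha}\frac{\partial^2L^*}{\partial z^k\partial\bar u^\beta}, \] where $\partial/\partial z^k$ is taken in the coordinates $(z,u)$ of $E$.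
   Context: Coordinates $(z^k,\eta^k)$ on $T'M$ and $(z^k,u^\alpha)$ on $E$; the anchor has holomorphic coefficients $\rho^k_\alpha(z)$. $(T'M,L)$: $L$ real function on $T'M$ with nondegenerate metric tensor $g_{i\bar j}=\partial^2L/\partial\eta^i\partial\bar\eta^j$, inverse $g^{\bar j i}$ ($g^{\bar ji}g_{k\bar j}=\delta^i_k$); $g^{\bar\beta\alpha}g_{\gamma\bar\beta}=\delta^\alpha_\gamma$. At each point (with $\eta=\rho u$) the vectors $\rho^k_\alpha\partial/\partial\eta^k$ are completed by vectors $Y_a=Y^k_a\partial/\partial\eta^k$, $a=1,\dots,n-m$, with $g_{i\bar j}Y^i_a\overline{\rho^j_\alpha}=0$ and $g_{i\bar j}Y^i_a\overline{Y^j_b}=\delta_{ab}$; the matrix $R=[\rho^i_\alpha;Y^i_a]$ is invertible and $\rho^\alpha_i$, $Y^a_i$ denote the rows of $R^{-1}$: $\rho^\alpha_i\rho^i_\beta=\delta^\alpha_\beta$, $\rho^\alpha_iY^i_a=0$, $Y^a_i\rho^i_\alpha=0$, $Y^a_iY^i_b=\delta^a_b$, $\rho^j_\alpha\rho^\alpha_i+Y^j_aY^a_i=\delta^j_i$. *)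

From HB Require Import structures.
From mathcomp Require Import all_boot all_order all_algebra.
From mathcomp Require Import all_classical all_reals all_analysis.
From mathcomp Require Import complex.
Set Implicit Arguments. Unset Strict Implicit. Unset Printing Implicit Defensive.
Import Order.TTheory GRing.Theory Num.Theory.
Import numFieldNormedType.Exports.
Local Open Scope ring_scope.

Definition cre (R : realType) (x : R[i]) : R := let: Complex a _ := x in a.
Definition cim (R : realType) (x : R[i]) : R := let: Complex _ b := x in b.

(* A point of C^n, encoded by its real and imaginary parts (x, y) in R^n x R^n. *)
Definition cvec (R : realType) (n : nat) := ('rV[R]_n * 'rV[R]_n)%type.

Definition cvec_to (R : realType) (n : nat) (x : cvec R n) (i : 'I_n) : R[i] :=
  Complex (x.1 0 i) (x.2 0 i).

Definition cvec_of (R : realType) (n : nat) (v : 'I_n -> R[i]) : cvec R n :=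
  (\row_i cre (v i), \row_i cim (v i)).

Definition dirRe (R : realType) (n : nat) (k : 'I_n) : cvec R n :=
  (delta_mx 0 k, 0).
Definition dirIm (R : realType) (n : nat) (k : 'I_n) : cvec R n :=
  (0, delta_mx 0 k).

Definition cD (R : realType) (V : normedModType R) (f : V -> R[i]) (p v : V) : R[i] :=
  Complex (derive (fun q => cre (f q)) p v) (derive (fun q => cim (f q)) p v).

Definition wz (R : realType) (V : normedModType R) (f : V -> R[i]) (p vx vy : V) : R[i] :=
  (cD f p vx - 'i * cD f p vy) / 2%:R.
Definition wzb (R : realType) (V : normedModType R) (f : V -> R[i]) (p vx vy : V) : R[i] :=
  (cD f p vx + 'i * cD f p vy) / 2%:R.

Definition dz1 (R : realType) (n : nat) (f : cvec R n -> R[i]) (z : cvec R n) (k : 'I_n) :=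
  wz f z (@dirRe R n k) (@dirIm R n k).
Definition dzb1 (R : realType) (n : nat) (f : cvec R n -> R[i]) (z : cvec R n) (k : 'I_n) :=
  wzb f z (@dirRe R n k) (@dirIm R n k).

Definition dZ (R : realType) (n p : nat) (f : cvec R n * cvec R p -> R[i])
  (q : cvec R n * cvec R p) (k : 'I_n) : R[i] :=
  wz f q (@dirRe R n k, 0) (@dirIm R n k, 0).
Definition dW (R : realType) (n p : nat) (f : cvec R n * cvec R p -> R[i])
  (q : cvec R n * cvec R p) (i : 'I_p) : R[i] :=
  wz f q (0, @dirRe R p i) (0, @dirIm R p i).
Definition dWb (R : realType) (n p : nat) (f : cvec R n * cvec R p -> R[i])
  (q : cvec R n * cvec R p) (i : 'I_p) : R[i] :=
  wzb f q (0, @dirRe R p i) (0, @dirIm R p i).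

Definition liftC (R : realType) (V : Type) (L : V -> R) : V -> R[i] :=
  fun q => Complex (L q) 0.

Definition holomorphic (R : realType) (n : nat) (f : cvec R n -> R[i]) : Prop :=
  forall z : cvec R n,
    [/\ differentiable (fun q => cre (f q)) z,
        differentiable (fun q => cim (f q)) z &
        forall k, dzb1 f z k = 0].

Definition twice_differentiable (R : realType) (V : normedModType R) (L : V -> R) : Prop :=
  (forall p : V, differentiable L p) /\
  (forall (v p : V), differentiable (fun q => derive L q v) p).

(* Metric tensor g_{i jbar} = d^2 L / d eta^i d etabar^j on T'M, coordinates (z, eta). *)
Definition gTM (R : realType) (n : nat) (L : cvec R n * cvec R n -> R)
  (q : cvec R n * cvec R n) : 'M[R[i]]_n :=
  \matrix_(i, j) dW (fun q' => dWb (liftC L) q' j) q i.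

(* Chern-Lagrange nonlinear connection
   N^i_k = g^{jbar i} d^2 L / dz^k detabar^j,  with g^{jbar i} = (invmx g) j i
   (so that sum_j g^{jbar i} g_{k jbar} = delta^i_k). *)
Definition NCL (R : realType) (n : nat) (L : cvec R n * cvec R n -> R)
  (q : cvec R n * cvec R n) (i k : 'I_n) : R[i] :=
  \sum_j (invmx (gTM L q)) j i * dZ (fun q' => dWb (liftC L) q' j) q k.

Definition eta_of (R : realType) (n m : nat) (rho : cvec R n -> 'M[R[i]]_(n, m))
  (q : cvec R n * cvec R m) : cvec R n :=
  cvec_of (fun i => \sum_g rho q.1 i g * cvec_to q.2 g).

Definition Lstar (R : realType) (n m : nat) (L : cvec R n * cvec R n -> R)
  (rho : cvec R n -> 'M[R[i]]_(n, m)) (q : cvec R n * cvec R m) : R :=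
  L (q.1, eta_of rho q).

Definition gE (R : realType) (n m : nat) (L : cvec R n * cvec R n -> R)
  (rho : cvec R n -> 'M[R[i]]_(n, m)) (q : cvec R n * cvec R m) : 'M[R[i]]_m :=
  \matrix_(a, b) dW (fun q' => dWb (liftC (Lstar L rho)) q' b) q a.

Definition Rmat (R : realType) (n m : nat) (hmn : (m <= n)%N)
  (rh : 'M[R[i]]_(n, m)) (Y : 'M[R[i]]_(n, n - m)) : 'M[R[i]]_n :=
  castmx (erefl n, subnKC hmn) (row_mx rh Y).

Definition rho_inv (R : realType) (n m : nat) (hmn : (m <= n)%N)
  (rh : 'M[R[i]]_(n, m)) (Y : 'M[R[i]]_(n, n - m)) (a : 'I_m) (i : 'I_n) : R[i] :=
  invmx (Rmat hmn rh Y) (widen_ord hmn a) i.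

(* Write L^* = L o phi with phi (z, u) = (z, rho(z) u).  Since rho is holomorphic, so is phi,
   and the Wirtinger chain rule through phi has no d/dzbar terms: dL^*/dubar^b is
   conj(rho^j_b) (dL/detabar^j) o phi.  The factor conj(rho^j_b) is antiholomorphic and passes
   through d/du^a and d/dz^k, which then give
     g_{a bbar} = rho^i_a conj(rho^j_b) g_{i jbar},
     d^2 L^* / dz^k dubar^b = conj(rho^j_b) (d^2 L / dz^k detabar^j
                                            + u^c d_k rho^i_c g_{i jbar}).  Put K = conj(rho)^T g^T, so that the hypothesis on Y
   reads K Y = 0.  Splitting x = rho (R^-1 x)_top + Y (R^-1 x)_bottom and applying K shows
   that the top m rows of R^-1 are (K rho)^-1 K, while K rho is the transpose of g_{a bbar};
   the identity follows by applying this to x = g^{-T} (d^2 L / dz^k detabar) + u^c d_k rho_c. *)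

From HB Require Import structures.
From mathcomp Require Import all_boot all_order all_algebra.
From mathcomp Require Import all_classical all_reals all_analysis.
From mathcomp Require Import complex.
From mathcomp Require Import ring.
Set Implicit Arguments. Unset Strict Implicit. Unset Printing Implicit Defensive.
Import Order.TTheory GRing.Theory Num.Theory.
Import numFieldNormedType.Exports.
Local Open Scope ring_scope.

(** * Real derivatives of complex-valued functions *)

Section ComplexValuedDerivative.
Variable R : realType.
Implicit Types (U V W : normedModType R).

Definition cdifferentiable V (f : V -> R[i]) :=
  forall p, differentiable (fun q => cre (f q)) p /\ differentiable (fun q => cim (f q)) p.

Lemma derive_comp U V W (g : V -> W) (f : U -> V) p v :
  differentiable f p -> differentiable g (f p) ->
  'D_v (g \o f) p = 'D_('D_v f p) g (f p).
Proof.
move=> df dg; rewrite !deriveE //; last exact: differentiable_comp.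
by rewrite diff_comp.
Qed.

Lemma derive_pair U V W (f : U -> V) (g : U -> W) p v :
  differentiable f p -> differentiable g p ->
  'D_v (fun q => (f q, g q)) p = ('D_v f p, 'D_v g p).
Proof. by move=> df dg; rewrite !deriveE ?diff_pair //; exact: differentiable_pair. Qed.

Lemma linear_continuous_derive V W (f : V -> W) p :
  linear f -> continuous f -> differentiable f p /\ forall v, 'D_v f p = f v.
Proof.
move=> lf cf; pose fL : {linear V -> W} := HB.pack f (GRing.isLinear.Build _ _ _ _ _ lf).
have -> : f = fL by [].
have dfL : differentiable fL p by exact: linear_differentiable.
by split=> // v; rewrite deriveE // diff_lin.
Qed.

Lemma derive_dirD V (h : V -> R) p v w : differentiable h p ->
  'D_(v + w) h p = 'D_v h p + 'D_w h p.
Proof. by move=> dh; rewrite !(deriveE _ dh) linearD. Qed.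

Lemma derive_dirZ V (h : V -> R) p (a : R) v : differentiable h p ->
  'D_(a *: v) h p = a * 'D_v h p.
Proof. by move=> dh; rewrite !(deriveE _ dh) linearZ. Qed.

Lemma Complex_product_rule (a b c d a' b' c' d' : R) :
  Complex (a * c' + c * a' - (b * d' + d * b')) (a * d' + d * a' + (b * c' + c * b')) =
  Complex a' b' * Complex c d + Complex a b * Complex c' d'.
Proof. by congr Complex; ring. Qed.

Section Rules.
Variable V : normedModType R.
Implicit Types f g : V -> R[i].

Lemma re_im_funD f g :
  (fun q => cre (f q + g q)) = (fun q => cre (f q)) + (fun q => cre (g q)) /\
  (fun q => cim (f q + g q)) = (fun q => cim (f q)) + (fun q => cim (g q)).
Proof. by split; apply: funext => q; rewrite ?fctE; case: (f q) (g q) => [? ?] [? ?]. Qed.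

Lemma re_im_funM f g :
  (fun q => cre (f q * g q)) =
    (fun q => cre (f q)) * (fun q => cre (g q)) - (fun q => cim (f q)) * (fun q => cim (g q)) /\
  (fun q => cim (f q * g q)) =
    (fun q => cre (f q)) * (fun q => cim (g q)) + (fun q => cim (f q)) * (fun q => cre (g q)).
Proof. by split; apply: funext => q; rewrite ?fctE; case: (f q) (g q) => [? ?] [? ?]. Qed.

Lemma re_im_fun_conj f :
  (fun q => cre (conjc (f q))) = (fun q => cre (f q)) /\
  (fun q => cim (conjc (f q))) = - (fun q => cim (f q)).
Proof. by split; apply: funext => q; rewrite ?fctE; case: (f q). Qed.

Lemma cdifferentiable_cst (c : R[i]) : cdifferentiable (fun _ : V => c).
Proof. by move=> p; split; exact: differentiable_cst. Qed.

Lemma cD_cst (c : R[i]) p v : cD (fun _ : V => c) p v = 0.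
Proof. by rewrite /cD !derive_cst. Qed.

Lemma cdifferentiableD f g :
  cdifferentiable f -> cdifferentiable g -> cdifferentiable (fun q => f q + g q).
Proof.
move=> df dg p; have [-> ->] := re_im_funD f g.
by have [? ?] := df p; have [? ?] := dg p; split; apply: differentiableD.
Qed.

Lemma cDD f g p v : cdifferentiable f -> cdifferentiable g ->
  cD (fun q => f q + g q) p v = cD f p v + cD g p v.
Proof.
move=> /(_ p) [? ?] /(_ p) [? ?]; rewrite /cD; have [-> ->] := re_im_funD f g.
by rewrite !deriveD //; exact: diff_derivable.
Qed.

Lemma cdifferentiableM f g :
  cdifferentiable f -> cdifferentiable g -> cdifferentiable (fun q => f q * g q).
Proof.
move=> df dg p; have [-> ->] := re_im_funM f g; have [? ?] := df p; have [? ?] := dg p.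
by split; [apply: differentiableB|apply: differentiableD]; apply: differentiableM.
Qed.

Lemma cDM f g p v : cdifferentiable f -> cdifferentiable g ->
  cD (fun q => f q * g q) p v = cD f p v * g p + f p * cD g p v.
Proof.
move=> /(_ p) [df1 df2] /(_ p) [dg1 dg2]; rewrite /cD; have [-> ->] := re_im_funM f g.
have d1 : derivable (fun q => cre (f q)) p v by exact: diff_derivable.
have d2 : derivable (fun q => cim (f q)) p v by exact: diff_derivable.
have d3 : derivable (fun q => cre (g q)) p v by exact: diff_derivable.
have d4 : derivable (fun q => cim (g q)) p v by exact: diff_derivable.
rewrite (deriveB (derivableM d1 d3) (derivableM d2 d4)).
rewrite (deriveD (derivableM d1 d4) (derivableM d2 d3)).
rewrite (deriveM d1 d3) (deriveM d2 d4) (deriveM d1 d4) (deriveM d2 d3).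
by case: (f p) (g p) => [a b] [c d]; exact: Complex_product_rule.
Qed.

Lemma cdifferentiable_conj f : cdifferentiable f -> cdifferentiable (fun q => conjc (f q)).
Proof.
move=> df p; have [-> ->] := re_im_fun_conj f.
by have [? ?] := df p; split => //; apply: differentiableN.
Qed.

Lemma cD_conj f p v : cdifferentiable f -> cD (fun q => conjc (f q)) p v = conjc (cD f p v).
Proof.
move=> /(_ p) [? ?]; rewrite /cD; have [-> ->] := re_im_fun_conj f.
by rewrite deriveN //; exact: diff_derivable.
Qed.

Lemma cdifferentiable_sum k (f : 'I_k -> V -> R[i]) :
  (forall t, cdifferentiable (f t)) -> cdifferentiable (fun q => \sum_t f t q).
Proof.
elim: k f => [|k IH] f df.
  by under [fun q => _]funext => q do rewrite big_ord0; exact: cdifferentiable_cst.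
under [fun q => _]funext => q do rewrite big_ord_recl.
by apply: cdifferentiableD => //; apply: IH.
Qed.

Lemma cD_sum k (f : 'I_k -> V -> R[i]) p v : (forall t, cdifferentiable (f t)) ->
  cD (fun q => \sum_t f t q) p v = \sum_t cD (f t) p v.
Proof.
elim: k f => [|k IH] f df.
  by under [fun q => _]funext => q do rewrite big_ord0; rewrite cD_cst big_ord0.
under [fun q => _]funext => q do rewrite big_ord_recl.
rewrite cDD ?big_ord_recl ?IH //; exact: cdifferentiable_sum.
Qed.

Lemma cD_dirD f p v w : cdifferentiable f -> cD f p (v + w) = cD f p v + cD f p w.
Proof. by move=> /(_ p) [d1 d2]; rewrite /cD !derive_dirD. Qed.

Lemma cD_dirZ f p (a : R) v : cdifferentiable f -> cD f p (a *: v) = Complex a 0 * cD f p v.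
Proof.
move=> /(_ p) [d1 d2]; rewrite /cD !derive_dirZ //=.
by congr Complex; rewrite mul0r ?subr0 ?addr0.
Qed.

Lemma cD_dir0 f p : cdifferentiable f -> cD f p 0 = 0.
Proof. by move=> df; rewrite -(scale0r 0) cD_dirZ // mul0r. Qed.

Lemma cD_dir_sum k f p (v : 'I_k -> V) : cdifferentiable f ->
  cD f p (\sum_t v t) = \sum_t cD f p (v t).
Proof. by move=> df; apply: big_morph => [x y|]; [exact: cD_dirD|exact: cD_dir0]. Qed.

End Rules.

Lemma cdifferentiable_comp U V (f : V -> R[i]) (phi : U -> V) :
  cdifferentiable f -> (forall q, differentiable phi q) -> cdifferentiable (fun q => f (phi q)).
Proof.
move=> df dphi p; have [? ?] := df (phi p); split.
  exact: (@differentiable_comp _ _ _ _ phi (fun q => cre (f q))).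
exact: (@differentiable_comp _ _ _ _ phi (fun q => cim (f q))).
Qed.

Lemma cD_comp U V (f : V -> R[i]) (phi : U -> V) p v :
  cdifferentiable f -> (forall q, differentiable phi q) ->
  cD (fun q => f (phi q)) p v = cD f (phi p) ('D_v phi p).
Proof.
move=> df dphi; have [? ?] := df (phi p).
rewrite /cD (@derive_comp _ _ _ (fun q => cre (f q))) //.
by rewrite (@derive_comp _ _ _ (fun q => cim (f q))).
Qed.

End ComplexValuedDerivative.

(** * Wirtinger derivatives *)

Section WirtingerCalculus.
Variable R : realType.
Implicit Types (V W : normedModType R).

Definition dZb (a b : nat) (f : cvec R a * cvec R b -> R[i]) q (k : 'I_a) : R[i] :=
  wzb f q (@dirRe R a k, 0) (@dirIm R a k, 0).

(* Unlike [rmorphD] and friends, these keep [conjc] as head symbol for later rewrites. *)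
Lemma conjcD (x y : R[i]) : conjc (x + y) = conjc x + conjc y. Proof. exact: rmorphD. Qed.
Lemma conjcM (x y : R[i]) : conjc (x * y) = conjc x * conjc y. Proof. exact: rmorphM. Qed.
Lemma conjcN (x : R[i]) : conjc (- x) = - conjc x. Proof. exact: rmorphN. Qed.

Lemma conjc_i : conjc ('i : R[i]) = - 'i.
Proof. by rewrite [RHS]/GRing.opp /= oppr0. Qed.

Lemma conjc_half : conjc (2%:R^-1 : R[i]) = 2%:R^-1.
Proof. by rewrite (@conjc_inv R) (@conjc_nat R). Qed.

Section WirtingerRules.
Variable V : normedModType R.
Implicit Types f g : V -> R[i].

Lemma wzM f g p vx vy : cdifferentiable f -> cdifferentiable g ->
  wz (fun q => f q * g q) p vx vy = wz f p vx vy * g p + f p * wz g p vx vy.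
Proof. by move=> df dg; rewrite /wz !cDM //; field. Qed.

Lemma wzbM f g p vx vy : cdifferentiable f -> cdifferentiable g ->
  wzb (fun q => f q * g q) p vx vy = wzb f p vx vy * g p + f p * wzb g p vx vy.
Proof. by move=> df dg; rewrite /wzb !cDM //; field. Qed.

Lemma wz_sum k (f : 'I_k -> V -> R[i]) p vx vy : (forall t, cdifferentiable (f t)) ->
  wz (fun q => \sum_t f t q) p vx vy = \sum_t wz (f t) p vx vy.
Proof. by move=> df; rewrite /wz !cD_sum // mulr_sumr -sumrB mulr_suml. Qed.

Lemma wzb_sum k (f : 'I_k -> V -> R[i]) p vx vy : (forall t, cdifferentiable (f t)) ->
  wzb (fun q => \sum_t f t q) p vx vy = \sum_t wzb (f t) p vx vy.
Proof. by move=> df; rewrite /wzb !cD_sum // mulr_sumr -big_split mulr_suml. Qed.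

Lemma wz_conj f p vx vy : cdifferentiable f ->
  wz (fun q => conjc (f q)) p vx vy = conjc (wzb f p vx vy).
Proof.
by move=> df; rewrite /wz /wzb !cD_conj // conjcM conjcD conjcM conjc_i conjc_half mulNr.
Qed.

Lemma wz_dir0 f p : cdifferentiable f -> wz f p 0 0 = 0.
Proof. by move=> df; rewrite /wz cD_dir0 // mulr0 subr0 mul0r. Qed.

Lemma wzb_dir0 f p : cdifferentiable f -> wzb f p 0 0 = 0.
Proof. by move=> df; rewrite /wzb cD_dir0 // mulr0 addr0 mul0r. Qed.

End WirtingerRules.

Lemma fst_derive V W (q : V * W) :
  differentiable (fun x : V * W => x.1) q /\ forall v, 'D_v (fun x : V * W => x.1) q = v.1.
Proof. by apply: linear_continuous_derive => // x; exact: cvg_fst. Qed.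

Lemma snd_derive V W (q : V * W) :
  differentiable (fun x : V * W => x.2) q /\ forall v, 'D_v (fun x : V * W => x.2) q = v.2.
Proof. by apply: linear_continuous_derive => // x; exact: cvg_snd. Qed.

Lemma differentiable_fst V W (q : V * W) : differentiable (fun x : V * W => x.1) q.
Proof. by case: (fst_derive q). Qed.

Lemma differentiable_snd V W (q : V * W) : differentiable (fun x : V * W => x.2) q.
Proof. by case: (snd_derive q). Qed.

Lemma cdifferentiable_fst V W (h : V -> R[i]) :
  cdifferentiable h -> cdifferentiable (fun q : V * W => h q.1).
Proof. by move=> dh; apply: cdifferentiable_comp => //; exact: differentiable_fst. Qed.

Lemma cdifferentiable_snd V W (h : W -> R[i]) :
  cdifferentiable h -> cdifferentiable (fun q : V * W => h q.2).
Proof. by move=> dh; apply: cdifferentiable_comp => //; exact: differentiable_snd. Qed.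

Lemma cD_fst V W (h : V -> R[i]) (q v : V * W) :
  cdifferentiable h -> cD (fun q => h q.1) q v = cD h q.1 v.1.
Proof.
move=> dh; rewrite (cD_comp _ _ dh); last exact: differentiable_fst.
by rewrite (fst_derive q).2.
Qed.

Lemma cD_snd V W (h : W -> R[i]) (q v : V * W) :
  cdifferentiable h -> cD (fun q => h q.2) q v = cD h q.2 v.2.
Proof.
move=> dh; rewrite (cD_comp _ _ dh); last exact: differentiable_snd.
by rewrite (snd_derive q).2.
Qed.

Lemma wz_fst V W (h : V -> R[i]) (q vx vy : V * W) :
  cdifferentiable h -> wz (fun q => h q.1) q vx vy = wz h q.1 vx.1 vy.1.
Proof. by move=> dh; rewrite /wz !cD_fst. Qed.

Lemma wzb_fst V W (h : V -> R[i]) (q vx vy : V * W) :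
  cdifferentiable h -> wzb (fun q => h q.1) q vx vy = wzb h q.1 vx.1 vy.1.
Proof. by move=> dh; rewrite /wzb !cD_fst. Qed.

Lemma wz_snd V W (h : W -> R[i]) (q vx vy : V * W) :
  cdifferentiable h -> wz (fun q => h q.2) q vx vy = wz h q.2 vx.2 vy.2.
Proof. by move=> dh; rewrite /wz !cD_snd. Qed.

Lemma wzb_snd V W (h : W -> R[i]) (q vx vy : V * W) :
  cdifferentiable h -> wzb (fun q => h q.2) q vx vy = wzb h q.2 vx.2 vy.2.
Proof. by move=> dh; rewrite /wzb !cD_snd. Qed.

End WirtingerCalculus.

(** * The chain rule on C^a x C^b *)

Lemma sum_mul_delta (T : pzSemiRingType) k (F : 'I_k -> T) (a : 'I_k) :
  \sum_t F t * (a == t)%:R = F a.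
Proof.
rewrite (bigD1 a) //= eqxx mulr1 big1 ?addr0 // => t.
by rewrite eq_sym => /negbTE ->; rewrite mulr0.
Qed.

Lemma sum_delta_mul (T : pzSemiRingType) k (F : 'I_k -> T) (a : 'I_k) :
  \sum_t (a == t)%:R * F t = F a.
Proof.
rewrite (bigD1 a) //= eqxx mul1r big1 ?addr0 // => t.
by rewrite eq_sym => /negbTE ->; rewrite mul0r.
Qed.

Lemma fst_sum (U V : zmodType) k (F : 'I_k -> U * V) : (\sum_t F t).1 = \sum_t (F t).1.
Proof. exact: big_morph. Qed.

Lemma snd_sum (U V : zmodType) k (F : 'I_k -> U * V) : (\sum_t F t).2 = \sum_t (F t).2.
Proof. exact: big_morph. Qed.

Section PairChainRule.
Variable R : realType.

Lemma cvec_re_derive a (l : 'I_a) (x : cvec R a) :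
  differentiable (fun y : cvec R a => y.1 0 l) x /\
  forall v, 'D_v (fun y : cvec R a => y.1 0 l) x = v.1 0 l.
Proof.
apply: linear_continuous_derive => [c u w|y]; first by rewrite !mxE.
apply: (@continuous_comp _ _ _ (fun y : cvec R a => y.1) (fun r : 'rV[R]_a => r 0 l)).
  exact: cvg_fst.
exact: coord_continuous.
Qed.

Lemma cvec_im_derive a (l : 'I_a) (x : cvec R a) :
  differentiable (fun y : cvec R a => y.2 0 l) x /\
  forall v, 'D_v (fun y : cvec R a => y.2 0 l) x = v.2 0 l.
Proof.
apply: linear_continuous_derive => [c u w|y]; first by rewrite !mxE.
apply: (@continuous_comp _ _ _ (fun y : cvec R a => y.2) (fun r : 'rV[R]_a => r 0 l)).
  exact: cvg_snd.
exact: coord_continuous.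
Qed.

Lemma cdifferentiable_cvec_to a (l : 'I_a) : cdifferentiable (fun x : cvec R a => cvec_to x l).
Proof. by move=> x; split; [case: (cvec_re_derive l x) | case: (cvec_im_derive l x)]. Qed.

Lemma cD_cvec_to a (l : 'I_a) x v : cD (fun x : cvec R a => cvec_to x l) x v = cvec_to v l.
Proof.
by rewrite /cD /= (cvec_re_derive l x).2 (cvec_im_derive l x).2.
Qed.

Lemma cvec_to_dirRe a (k l : 'I_a) : cvec_to (dirRe R k) l = (k == l)%:R.
Proof. by rewrite /cvec_to /= !mxE eqxx eq_sym; case: (k == l). Qed.

Lemma cvec_to_dirIm a (k l : 'I_a) : cvec_to (dirIm R k) l = 'i * (k == l)%:R.
Proof. by rewrite /cvec_to /= !mxE eqxx eq_sym; case: (k == l); rewrite ?mulr1 ?mulr0. Qed.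

Lemma wz_cvec_to a (k l : 'I_a) z :
  wz (fun x : cvec R a => cvec_to x l) z (dirRe R k) (dirIm R k) = (k == l)%:R.
Proof. by rewrite /wz !cD_cvec_to cvec_to_dirRe cvec_to_dirIm mulrA mulCii; field. Qed.

Lemma wzb_cvec_to a (k l : 'I_a) z :
  wzb (fun x : cvec R a => cvec_to x l) z (dirRe R k) (dirIm R k) = 0.
Proof.
by rewrite /wzb !cD_cvec_to cvec_to_dirRe cvec_to_dirIm mulrA mulCii mulN1r subrr mul0r.
Qed.

Section PairCoordinates.
Variables (a b : nat) (q vx vy : cvec R a * cvec R b).

Lemma wz_cvec_to_fst (l : 'I_a) :
  wz (fun q => cvec_to q.1 l) q vx vy = wz (fun x => cvec_to x l) q.1 vx.1 vy.1.
Proof. exact: (wz_fst _ _ _ (cdifferentiable_cvec_to l)). Qed.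

Lemma wzb_cvec_to_fst (l : 'I_a) :
  wzb (fun q => cvec_to q.1 l) q vx vy = wzb (fun x => cvec_to x l) q.1 vx.1 vy.1.
Proof. exact: (wzb_fst _ _ _ (cdifferentiable_cvec_to l)). Qed.

Lemma wz_cvec_to_snd (l : 'I_b) :
  wz (fun q => cvec_to q.2 l) q vx vy = wz (fun x => cvec_to x l) q.2 vx.2 vy.2.
Proof. exact: (wz_snd _ _ _ (cdifferentiable_cvec_to l)). Qed.

Lemma wzb_cvec_to_snd (l : 'I_b) :
  wzb (fun q => cvec_to q.2 l) q vx vy = wzb (fun x => cvec_to x l) q.2 vx.2 vy.2.
Proof. exact: (wzb_snd _ _ _ (cdifferentiable_cvec_to l)). Qed.

End PairCoordinates.

Lemma real_combination_wirtinger (r s : R) (X Y : R[i]) :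
  Complex r 0 * X + Complex s 0 * Y =
  Complex r s * ((X - 'i * Y) / 2%:R) + conjc (Complex r s) * ((X + 'i * Y) / 2%:R).
Proof.
have -> : Complex r s = Complex r 0 + 'i * Complex s 0 by congr Complex; ring.
have -> : conjc (Complex r 0 + 'i * Complex s 0) = Complex r 0 - 'i * Complex s 0.
  by congr Complex; ring.
have ii : 'i * 'i = -1 :> R[i] by exact: mulCii.
move: (Complex r 0) (Complex s 0) ii; move: ('i : R[i]) => j A B jj.
transitivity (A * X - j * j * (B * Y)); first by rewrite jj; ring.
by field.
Qed.

Lemma cD_wirtinger (V : normedModType R) (f : V -> R[i]) p k (r s : 'I_k -> R)
    (e e' : 'I_k -> V) :
  cdifferentiable f ->
  cD f p (\sum_t (r t *: e t + s t *: e' t)) =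
  \sum_t (Complex (r t) (s t) * wz f p (e t) (e' t)
          + conjc (Complex (r t) (s t)) * wzb f p (e t) (e' t)).
Proof.
move=> df; rewrite cD_dir_sum //; apply: eq_bigr => t _.
by rewrite cD_dirD // !cD_dirZ // real_combination_wirtinger.
Qed.

Lemma pair_dir_sum a b (w : cvec R a * cvec R b) :
  w = \sum_l (w.1.1 0 l *: (dirRe R l, 0) + w.1.2 0 l *: (dirIm R l, 0))
    + \sum_i (w.2.1 0 i *: (0, dirRe R i) + w.2.2 0 i *: (0, dirIm R i)).
Proof.
case: w => [[x y] [x' y']].
apply: injective_projections; apply: injective_projections; rewrite /= ?(fst_sum, snd_sum) /=.
all: apply/rowP => j; rewrite !(mxE, summxE).
all: under eq_bigr => k _ do rewrite !mxE /= ?mulr0 ?addr0 ?add0r.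
all: under [X in _ = _ + X]eq_bigr => k _ do rewrite !mxE /= ?mulr0 ?addr0 ?add0r.
all: by rewrite big1_eq ?addr0 ?add0r sum_mul_delta.
Qed.

Lemma cD_pair a b (f : cvec R a * cvec R b -> R[i]) p w : cdifferentiable f ->
  cD f p w = \sum_l (cvec_to w.1 l * dZ f p l + conjc (cvec_to w.1 l) * dZb f p l)
           + \sum_i (cvec_to w.2 i * dW f p i + conjc (cvec_to w.2 i) * dWb f p i).
Proof. by move=> df; rewrite {1}(pair_dir_sum w) cD_dirD // !cD_wirtinger. Qed.

Lemma holomorphic_term (x y X Y : R[i]) : (x + 'i * y) / 2%:R = 0 ->
  (x * X + conjc x * Y - 'i * (y * X + conjc y * Y)) / 2%:R = (x - 'i * y) / 2%:R * X.
Proof.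
move/eqP; rewrite mulf_eq0 invr_eq0 pnatr_eq0 orbF addr_eq0 => /eqP ->.
by rewrite conjcN conjcM conjc_i; ring.
Qed.

Lemma antiholomorphic_term (x y X Y : R[i]) : (x + 'i * y) / 2%:R = 0 ->
  (x * X + conjc x * Y + 'i * (y * X + conjc y * Y)) / 2%:R = conjc ((x - 'i * y) / 2%:R) * Y.
Proof.
move/eqP; rewrite mulf_eq0 invr_eq0 pnatr_eq0 orbF addr_eq0 => /eqP ->.
by rewrite !(conjcM, conjcD, conjcN) conjc_i conjc_half; ring.
Qed.

Section Composition.
Variables (V : normedModType R) (a b : nat) (f : cvec R a * cvec R b -> R[i]).
Variables (phi1 : V -> cvec R a) (phi2 : V -> cvec R b).
Hypothesis df : cdifferentiable f.
Hypotheses (dphi1 : forall q, differentiable phi1 q) (dphi2 : forall q, differentiable phi2 q).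

Lemma cD_cvec_to_comp c (psi : V -> cvec R c) (l : 'I_c) q v :
  (forall q, differentiable psi q) ->
  cD (fun q => cvec_to (psi q) l) q v = cvec_to ('D_v psi q) l.
Proof. by move=> dpsi; rewrite (cD_comp _ _ (cdifferentiable_cvec_to l) dpsi) cD_cvec_to. Qed.

Lemma cD_comp_pair q v :
  cD (fun q => f (phi1 q, phi2 q)) q v =
    \sum_l (cD (fun q => cvec_to (phi1 q) l) q v * dZ f (phi1 q, phi2 q) l
           + conjc (cD (fun q => cvec_to (phi1 q) l) q v) * dZb f (phi1 q, phi2 q) l)
  + \sum_i (cD (fun q => cvec_to (phi2 q) i) q v * dW f (phi1 q, phi2 q) i
           + conjc (cD (fun q => cvec_to (phi2 q) i) q v) * dWb f (phi1 q, phi2 q) i).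
Proof.
have dphi q' : differentiable (fun q => (phi1 q, phi2 q)) q' by exact: differentiable_pair.
rewrite (cD_comp _ _ df dphi) derive_pair // cD_pair //.
by congr (_ + _); apply: eq_bigr => l _; rewrite !cD_cvec_to_comp.
Qed.

Lemma wz_comp_holomorphic q vx vy :
  (forall l, wzb (fun q => cvec_to (phi1 q) l) q vx vy = 0) ->
  (forall i, wzb (fun q => cvec_to (phi2 q) i) q vx vy = 0) ->
  wz (fun q => f (phi1 q, phi2 q)) q vx vy =
    \sum_l wz (fun q => cvec_to (phi1 q) l) q vx vy * dZ f (phi1 q, phi2 q) l
  + \sum_i wz (fun q => cvec_to (phi2 q) i) q vx vy * dW f (phi1 q, phi2 q) i.
Proof.
move=> hol1 hol2; rewrite /wz !cD_comp_pair !mulrDr opprD addrACA mulrDl.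
rewrite !mulr_sumr -!sumrB !mulr_suml; congr (_ + _); apply: eq_bigr => t _.
  exact: holomorphic_term (hol1 t).
exact: holomorphic_term (hol2 t).
Qed.

Lemma wzb_comp_holomorphic q vx vy :
  (forall l, wzb (fun q => cvec_to (phi1 q) l) q vx vy = 0) ->
  (forall i, wzb (fun q => cvec_to (phi2 q) i) q vx vy = 0) ->
  wzb (fun q => f (phi1 q, phi2 q)) q vx vy =
    \sum_l conjc (wz (fun q => cvec_to (phi1 q) l) q vx vy) * dZb f (phi1 q, phi2 q) l
  + \sum_i conjc (wz (fun q => cvec_to (phi2 q) i) q vx vy) * dWb f (phi1 q, phi2 q) i.
Proof.
move=> hol1 hol2; rewrite /wzb !cD_comp_pair !mulrDr addrACA mulrDl.
rewrite !mulr_sumr -!big_split !mulr_suml; congr (_ + _); apply: eq_bigr => t _.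
  exact: antiholomorphic_term (hol1 t).
exact: antiholomorphic_term (hol2 t).
Qed.

End Composition.

End PairChainRule.

(** * Linear algebra *)

Section SplitInverse.
Variables (F : fieldType) (m d : nat) (P : 'M[F]_(m + d, m)) (Y : 'M[F]_(m + d, d)).
Hypothesis PY_unit : row_mx P Y \in unitmx.
Local Notation U := (usubmx (invmx (row_mx P Y))).

Lemma usubmx_invmx_mulP : U *m P = 1%:M.
Proof.
have := congr1 ulsubmx (mulVmx PY_unit).
by rewrite /ulsubmx -mul_usub_mx mul_mx_row row_mxKl scalar_mx_block /block_mx col_mxKu row_mxKl.
Qed.

Lemma usubmx_invmx_mulY : U *m Y = 0.
Proof.
have := congr1 ursubmx (mulVmx PY_unit).
by rewrite /ursubmx -mul_usub_mx mul_mx_row row_mxKr scalar_mx_block /block_mx col_mxKu row_mxKr.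
Qed.

Lemma mulmx_usubmx_invmx (K : 'M[F]_(m, m + d)) : K *m Y = 0 -> K *m P *m U = K.
Proof.
move=> KY; apply: (can_inj (mulmxK PY_unit)) => /=.
by rewrite -!mulmxA !mul_mx_row usubmx_invmx_mulP usubmx_invmx_mulY mulmx1 !mulmx0 KY.
Qed.

Lemma usubmx_invmx_row_mx (K : 'M[F]_(m, m + d)) :
  K *m Y = 0 -> K *m P \in unitmx -> U = invmx (K *m P) *m K.
Proof. by move=> KY KPu; rewrite -{2}(mulmx_usubmx_invmx KY) mulmxA mulVmx // mul1mx. Qed.

End SplitInverse.

Lemma unitmx_adjoint_metric (R : rcfType) m d (P : 'M[R[i]]_(m + d, m)) Y
    (G : 'M[R[i]]_(m + d)) :
  row_mx P Y \in unitmx -> G \in unitmx -> (map_mx conjc P)^T *m G *m Y = 0 ->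
  (map_mx conjc P)^T *m G *m P \in unitmx.
Proof.
move=> PYu Gu KY; pose U := usubmx (invmx (row_mx P Y)).
(* K P U = K (because K Y = 0) and U P = 1 make U G^-1 (conj U)^T a right inverse of K P. *)
have inv : (map_mx conjc P)^T *m G *m P *m (U *m invmx G *m (map_mx conjc U)^T) = 1%:M.
  rewrite !mulmxA (mulmx_usubmx_invmx PYu KY) (mulmxK Gu) -trmx_mul -map_mxM.
  by rewrite usubmx_invmx_mulP // map_mx1 trmx1.
by case: (mulmx1_unit inv).
Qed.

Lemma rho_inv_adjoint_metric (R : realType) n m (hmn : (m <= n)%N) (P : 'M[R[i]]_(n, m))
    (Y : 'M[R[i]]_(n, n - m)) (G : 'M[R[i]]_n) :
  Rmat hmn P Y \in unitmx -> G \in unitmx -> (map_mx conjc P)^T *m G *m Y = 0 ->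
  \matrix_(a, i) rho_inv hmn P Y a i =
    invmx ((map_mx conjc P)^T *m G *m P) *m ((map_mx conjc P)^T *m G).
Proof.
rewrite /rho_inv /Rmat; move: (subnKC hmn) => e; move: (n - m)%N Y e => d Y e; subst n.
rewrite castmx_id => PYu Gu KY.
rewrite -(usubmx_invmx_row_mx PYu KY (unitmx_adjoint_metric PYu Gu KY)).
by apply/matrixP => a i; rewrite !mxE; congr (invmx _ _ _); apply: val_inj.
Qed.

Lemma cvec_to_of (R : realType) a (v : 'I_a -> R[i]) l : cvec_to (cvec_of v) l = v l.
Proof. by rewrite /cvec_to /cvec_of /= !mxE; case: (v l). Qed.

Lemma differentiable_row (R : realType) (V : normedModType R) a (h : 'I_a -> V -> R) p :
  (forall l, differentiable (h l) p) -> differentiable (fun q => \row_l h l q : 'rV[R]_a) p.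
Proof.
move=> dh.
have -> : (fun q => \row_l h l q : 'rV[R]_a) = \sum_l (fun q => h l q *: ('e_l : 'rV[R]_a)).
  apply: funext => q; rewrite fct_sumE [LHS]row_sum_delta.
  by apply: eq_bigr => l _; rewrite mxE.
by apply: differentiable_sum => l; exact: differentiableZl.
Qed.

Lemma differentiable_cvec_of (R : realType) (V : normedModType R) a
    (f : 'I_a -> V -> R[i]) p :
  (forall l, cdifferentiable (f l)) -> differentiable (fun q => cvec_of (fun l => f l q)) p.
Proof.
by move=> df; apply: differentiable_pair; apply: differentiable_row => l; case: (df l p).
Qed.

(** * The Lagrangian induced on E *)

Section InducedLagrangian.
Variables (R : realType) (n m : nat) (rho : cvec R n -> 'M[R[i]]_(n, m)).
Variable L : cvec R n * cvec R n -> R.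
Hypothesis rho_holomorphic : forall i a, holomorphic (fun z => rho z i a).
Hypothesis L_C2 : twice_differentiable L.

Local Notation E := (cvec R n * cvec R m)%type.
Local Notation eta i := (fun q : E => cvec_to (eta_of rho q) i).
Local Notation Lbar j := (fun p => dWb (liftC L) p j).

Definition anchor_map (q : E) : cvec R n * cvec R n := (q.1, eta_of rho q).

Lemma cdifferentiable_rho i a : cdifferentiable (fun z => rho z i a).
Proof. by move=> z; case: (rho_holomorphic i a z). Qed.

Lemma wzb_rho i a z k : wzb (fun z => rho z i a) z (dirRe R k) (dirIm R k) = 0.
Proof. by case: (rho_holomorphic i a z) => _ _; apply. Qed.

Lemma wz_rho_fst i a (q vx vy : E) :
  wz (fun q => rho q.1 i a) q vx vy = wz (fun z => rho z i a) q.1 vx.1 vy.1.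
Proof. exact: (wz_fst _ _ _ (cdifferentiable_rho i a)). Qed.

Lemma wzb_rho_fst i a (q vx vy : E) :
  wzb (fun q => rho q.1 i a) q vx vy = wzb (fun z => rho z i a) q.1 vx.1 vy.1.
Proof. exact: (wzb_fst _ _ _ (cdifferentiable_rho i a)). Qed.

Lemma eta_fun i : eta i = fun q => \sum_g rho q.1 i g * cvec_to q.2 g.
Proof. by apply: funext => q; exact: cvec_to_of. Qed.

Lemma cdifferentiable_eta_term i g : cdifferentiable (fun q : E => rho q.1 i g * cvec_to q.2 g).
Proof.
apply: cdifferentiableM; first exact: (cdifferentiable_fst (cdifferentiable_rho i g)).
exact: (cdifferentiable_snd (cdifferentiable_cvec_to g)).
Qed.

Lemma differentiable_eta_of q : differentiable (eta_of rho) q.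
Proof.
apply: (differentiable_cvec_of (f := fun i q => \sum_g rho q.1 i g * cvec_to q.2 g)) => i.
by apply: cdifferentiable_sum => g; exact: cdifferentiable_eta_term.
Qed.

Lemma wz_eta i q vx vy : wz (eta i) q vx vy =
  \sum_g (wz (fun z => rho z i g) q.1 vx.1 vy.1 * cvec_to q.2 g
          + rho q.1 i g * wz (fun x => cvec_to x g) q.2 vx.2 vy.2).
Proof.
rewrite eta_fun wz_sum => [|g]; last exact: cdifferentiable_eta_term.
apply: eq_bigr => g _; rewrite wzM ?wz_rho_fst ?wz_cvec_to_snd //.
  exact: (cdifferentiable_fst (cdifferentiable_rho i g)).
exact: (cdifferentiable_snd (cdifferentiable_cvec_to g)).
Qed.

Lemma wzb_eta i q vx vy : wzb (eta i) q vx vy =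
  \sum_g (wzb (fun z => rho z i g) q.1 vx.1 vy.1 * cvec_to q.2 g
          + rho q.1 i g * wzb (fun x => cvec_to x g) q.2 vx.2 vy.2).
Proof.
rewrite eta_fun wzb_sum => [|g]; last exact: cdifferentiable_eta_term.
apply: eq_bigr => g _; rewrite wzbM ?wzb_rho_fst ?wzb_cvec_to_snd //.
  exact: (cdifferentiable_fst (cdifferentiable_rho i g)).
exact: (cdifferentiable_snd (cdifferentiable_cvec_to g)).
Qed.

Lemma dZ_eta i q k : dZ (eta i) q k = \sum_g dz1 (fun z => rho z i g) q.1 k * cvec_to q.2 g.
Proof.
rewrite /dZ wz_eta; apply: eq_bigr => g _.
by rewrite wz_dir0 ?mulr0 ?addr0 //; exact: cdifferentiable_cvec_to.
Qed.

Lemma dZb_eta i q k : dZb (eta i) q k = 0.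
Proof.
rewrite /dZb wzb_eta big1 // => g _.
by rewrite wzb_rho wzb_dir0 ?mulr0 ?mul0r ?addr0 //; exact: cdifferentiable_cvec_to.
Qed.

Lemma dW_eta i q a : dW (eta i) q a = rho q.1 i a.
Proof.
rewrite /dW wz_eta -[RHS](sum_mul_delta (fun g => rho q.1 i g) a); apply: eq_bigr => g _.
by rewrite wz_dir0 ?mul0r ?add0r ?wz_cvec_to //; exact: cdifferentiable_rho.
Qed.

Lemma dWb_eta i q a : dWb (eta i) q a = 0.
Proof.
rewrite /dWb wzb_eta big1 // => g _.
by rewrite wzb_dir0 ?wzb_cvec_to ?mulr0 ?mul0r ?addr0 //; exact: cdifferentiable_rho.
Qed.

Lemma differentiable_anchor_map q : differentiable anchor_map q.
Proof. exact: differentiable_pair (differentiable_fst q) (differentiable_eta_of q). Qed.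

Lemma dZ_anchor_map f q k : cdifferentiable f ->
  dZ (fun q => f (anchor_map q)) q k =
  dZ f (anchor_map q) k + \sum_i dZ (eta i) q k * dW f (anchor_map q) i.
Proof.
move=> df.
rewrite [LHS]/dZ.
rewrite (wz_comp_holomorphic (f := f) (phi1 := fun q : E => q.1) (phi2 := eta_of rho)) //.
- rewrite -/(anchor_map q) [X in X + _ = _](_ : _ = dZ f (anchor_map q) k) //.
  rewrite -[RHS](sum_delta_mul (fun l => dZ f (anchor_map q) l) k).
  by apply: eq_bigr => l _; rewrite wz_cvec_to_fst wz_cvec_to.
- exact: differentiable_fst.
- exact: differentiable_eta_of.
- by move=> l; rewrite wzb_cvec_to_fst wzb_cvec_to.
- by move=> i; rewrite -(dZb_eta i q k).
Qed.

Lemma dW_anchor_map f q a : cdifferentiable f ->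
  dW (fun q => f (anchor_map q)) q a = \sum_i rho q.1 i a * dW f (anchor_map q) i.
Proof.
move=> df.
rewrite [LHS]/dW.
rewrite (wz_comp_holomorphic (f := f) (phi1 := fun q : E => q.1) (phi2 := eta_of rho)) //.
- rewrite -/(anchor_map q) [X in X + _ = _](_ : _ = 0) ?add0r.
    by apply: eq_bigr => i _; rewrite -(dW_eta i q a).
  apply: big1 => l _.
  by rewrite wz_cvec_to_fst wz_dir0 ?mul0r //; exact: cdifferentiable_cvec_to.
- exact: differentiable_fst.
- exact: differentiable_eta_of.
- by move=> l; rewrite wzb_cvec_to_fst wzb_dir0 //; exact: cdifferentiable_cvec_to.
- by move=> i; rewrite -(dWb_eta i q a).
Qed.

Lemma dWb_anchor_map f q a : cdifferentiable f ->
  dWb (fun q => f (anchor_map q)) q a = \sum_i conjc (rho q.1 i a) * dWb f (anchor_map q) i.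
Proof.
move=> df.
rewrite [LHS]/dWb.
rewrite (wzb_comp_holomorphic (f := f) (phi1 := fun q : E => q.1) (phi2 := eta_of rho)) //.
- rewrite -/(anchor_map q) [X in X + _ = _](_ : _ = 0) ?add0r.
    by apply: eq_bigr => i _; rewrite -(dW_eta i q a).
  apply: big1 => l _.
  by rewrite wz_cvec_to_fst wz_dir0 ?conjc0 ?mul0r //; exact: cdifferentiable_cvec_to.
- exact: differentiable_fst.
- exact: differentiable_eta_of.
- by move=> l; rewrite wzb_cvec_to_fst wzb_dir0 //; exact: cdifferentiable_cvec_to.
- by move=> i; rewrite -(dWb_eta i q a).
Qed.

Lemma cdifferentiable_liftC : cdifferentiable (liftC L).
Proof. by move=> p; split; [exact: L_C2.1 | exact: differentiable_cst]. Qed.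

Lemma cdifferentiable_Lbar j : cdifferentiable (Lbar j).
Proof.
have dL v : cdifferentiable (fun p => cD (liftC L) p v).
  move=> p; split; first exact: L_C2.2.
  rewrite /cD /=; under [fun _ => _]funext => p' do rewrite derive_cst.
  exact: differentiable_cst.
rewrite /dWb /wzb; apply: cdifferentiableM; last exact: cdifferentiable_cst.
by apply: cdifferentiableD => //; apply: cdifferentiableM => //; exact: cdifferentiable_cst.
Qed.

(* [liftC (Lstar L rho)] is convertible to [fun q => liftC L (anchor_map q)]. *)
Lemma dWb_Lstar q b :
  dWb (liftC (Lstar L rho)) q b = \sum_j conjc (rho q.1 j b) * Lbar j (anchor_map q).
Proof. exact: (dWb_anchor_map (f := liftC L) q b cdifferentiable_liftC). Qed.

Lemma wz_sum_conj_rho b (h : 'I_n -> E -> R[i]) q vx vy :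
  (forall j, cdifferentiable (h j)) ->
  (forall j, wzb (fun z => rho z j b) q.1 vx.1 vy.1 = 0) ->
  wz (fun q => \sum_j conjc (rho q.1 j b) * h j q) q vx vy =
  \sum_j conjc (rho q.1 j b) * wz (h j) q vx vy.
Proof.
have drho j : cdifferentiable (fun q : E => rho q.1 j b).
  exact: (cdifferentiable_fst (cdifferentiable_rho j b)).
move=> dh hol; rewrite wz_sum => [|j]; last first.
  by apply: cdifferentiableM => //; exact: cdifferentiable_conj.
apply: eq_bigr => j _; rewrite wzM ?wz_conj ?wzb_rho_fst ?hol ?conjc0 ?mul0r ?add0r //.
exact: cdifferentiable_conj.
Qed.

Lemma cdifferentiable_Lbar_anchor j : cdifferentiable (fun q => Lbar j (anchor_map q)).
Proof. exact: (cdifferentiable_comp (cdifferentiable_Lbar j) differentiable_anchor_map). Qed.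

Lemma dWb_Lstar_fun b : (fun q => dWb (liftC (Lstar L rho)) q b) =
  (fun q => \sum_j conjc (rho q.1 j b) * Lbar j (anchor_map q)).
Proof. by apply: funext => q; exact: dWb_Lstar. Qed.

Lemma gE_anchor q :
  gE L rho q = (rho q.1)^T *m gTM L (anchor_map q) *m map_mx conjc (rho q.1).
Proof.
apply/matrixP => a b; rewrite [LHS]mxE dWb_Lstar_fun /dW wz_sum_conj_rho => [|j|j].
- rewrite !mxE; apply: eq_bigr => j _; rewrite !mxE [RHS]mulrC; congr (_ * _).
  rewrite -[wz _ _ _ _]/(dW _ q a) [dW _ q a](dW_anchor_map q a (cdifferentiable_Lbar j)).
  by apply: eq_bigr => i _; rewrite !mxE.
- exact: cdifferentiable_Lbar_anchor.
- by rewrite wzb_dir0 //; exact: cdifferentiable_rho.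
Qed.

Lemma dZ_dWb_Lstar q k :
  \col_b dZ (fun q => dWb (liftC (Lstar L rho)) q b) q k =
  (map_mx conjc (rho q.1))^T *m
    (\col_j dZ (Lbar j) (anchor_map q) k + (gTM L (anchor_map q))^T *m \col_i dZ (eta i) q k).
Proof.
apply/matrixP => b z; rewrite !mxE dWb_Lstar_fun /dZ wz_sum_conj_rho => [|j|j].
- apply: eq_bigr => j _; rewrite !mxE.
  rewrite -[wz _ _ _ _]/(dZ _ q k) [dZ _ q k](dZ_anchor_map q k (cdifferentiable_Lbar j)).
  by congr (_ * (_ + _)); apply: eq_bigr => i _; rewrite !mxE mulrC.
- exact: cdifferentiable_Lbar_anchor.
- exact: wzb_rho.
Qed.

End InducedLagrangian.

Theorem proposition3p3 (R : realType) (n m : nat) (hmn : (m < n)%N)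
  (rho : cvec R n -> 'M[R[i]]_(n, m))
  (L : cvec R n * cvec R n -> R)
  (Hhol : forall (i : 'I_n) (a : 'I_m), holomorphic (fun z => rho z i a))
  (Hrank : forall z, \rank (rho z) = m)
  (HL : twice_differentiable L)
  (Hnondeg : forall q, gTM L q \in unitmx)
  (z0 : cvec R n) (u0 : cvec R m)
  (Y : 'M[R[i]]_(n, n - m)) :
  let g0 := gTM L (z0, eta_of rho (z0, u0)) in
  (forall (a : 'I_(n - m)) (al : 'I_m),
      \sum_i \sum_j g0 i j * Y i a * conjc (rho z0 j al) = 0) ->
  (forall (a b : 'I_(n - m)),
      \sum_i \sum_j g0 i j * Y i a * conjc (Y j b) = (a == b)%:R) ->
  Rmat (ltnW hmn) (rho z0) Y \in unitmx ->
  forall (al : 'I_m) (k : 'I_n),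
    \sum_i rho_inv (ltnW hmn) (rho z0) Y al i *
        (NCL L (z0, eta_of rho (z0, u0)) i k
         + \sum_g cvec_to u0 g * dz1 (fun z => rho z i g) z0 k)
    = \sum_b (invmx (gE L rho (z0, u0))) b al *
        dZ (fun q => dWb (liftC (Lstar L rho)) q b) (z0, u0) k.
Proof.
move=> g0 hY _ PYu al k.
pose P := rho z0; pose K := (map_mx conjc P)^T *m g0^T.
pose c := \col_j dZ (fun p => dWb (liftC L) p j) (z0, eta_of rho (z0, u0)) k.
pose D := \col_i dZ (fun q => cvec_to (eta_of rho q) i) (z0, u0) k.
have KY : K *m Y = 0.
  apply/matrixP => b a; rewrite mxE [RHS]mxE -[RHS](hY a b); apply: eq_bigr => i _.
  rewrite !mxE mulr_suml; apply: eq_bigr => j _; rewrite !mxE; ring.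
have G'u : g0^T \in unitmx by rewrite unitmx_tr; exact: Hnondeg.
have gEE : gE L rho (z0, u0) = (K *m P)^T.
  by rewrite (gE_anchor Hhol HL) /K !trmx_mul !trmxK mulmxA.
have wE : \col_b dZ (fun q => dWb (liftC (Lstar L rho)) q b) (z0, u0) k =
          K *m (invmx g0^T *m c + D).
  by rewrite (dZ_dWb_Lstar Hhol HL) !mulmxDr !mulmxA (mulmxK G'u).
transitivity ((\matrix_(a, i) rho_inv (ltnW hmn) P Y a i *m (invmx g0^T *m c + D)) al 0).
  rewrite mxE; apply: eq_bigr => i _; rewrite !mxE; congr (_ * (_ + _)).
    by apply: eq_bigr => j _; rewrite -trmx_inv !mxE.
  by rewrite (dZ_eta Hhol); apply: eq_bigr => g _; rewrite mulrC.
rewrite (rho_inv_adjoint_metric PYu G'u KY) -/K -mulmxA -wE gEE mxE.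
by apply: eq_bigr => b _; rewrite -trmx_inv !mxE.
Qed.
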